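(* Let ${\cal R}={\cal D}\times[0,N]$ be a cylinder and let ${\mathbf t}$ be a mixed tiling of ${\cal R}$. Let $\kappa$ be the set of unit cubes $[x,x+1]\times[y,y+1]\times[z,z+1]\subseteq{\cal R}$ with $x+y$ even and $\bar\kappa$ the set of those with $x+y$ odd. Then $\operatorname{Tw}_\kappa({\mathbf t})=-\operatorname{Tw}_{\bar\kappa}({\mathbf t})$.
   Context: Unit cubes are $[x,x+1]\times[y,y+1]\times[z,z+1]$, $(x,y,z)\in\mathbb{Z}^3$; the $n$-th floor is $z\in[n,n+1]$. A cylinder is ${\cal R}={\cal D}\times[0,N]$ where ${\cal D}$ is a connected, simply connected finite union of unit squares in the plane. A domino is a union of two unit cubes sharing a face; it is vertical if parallel to the $z$-axis, horizontal otherwise. A horizontal slab is a $2\times2\times1$ box $[x,x+2]\times[y,y+2]\times[z,z+1]$. A mixed tiling of ${\cal R}$ is a tiling of ${\cal R}$ by horizontal slabs and vertical dominoes. Twist of a domino tiling ${\mathbf s}$ of a cubiculated region: for an ordered pair $(d_0,d_1)$ of dominoes of ${\mathbf s}$ with $d_0$ horizontal and parallel to the $y$-axis and $d_1$ vertical, say $d_1$ affects $d_0$ if $d_1$ has a cube on the floor of $d_0$ and the orthogonal projections of the interiors of $d_0,d_1$ onto the plane $x=0$ intersect. In that case the effect is $\pm1$, determined by four binary parameters: whether $d_1$ lies on the $+x$ or $-x$ side of $d_0$; which of the two cubes of $d_0$ (smaller or larger $y$) has the same $y$-range as $d_1$; the parity of the $x$-distance between them; and whether the lower cube of $d_1$ lies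 on the floor of $d_0$ or on the floor below. Changing any one parameter changes the sign, with a fixed global normalization. Otherwise the effect is $0$. $\operatorname{Tw}({\mathbf s})$ is $\frac14$ of the sum of all effects. Transformation: for a set $\kappa$ of cubes of one parity of $x+y$, replace each cube $[x,x+1]\times[y,y+1]\times[z,z+1]$ in $\kappa$ by $\tilde S\times[z,z+1]$, where $\tilde S$ is the square with vertices $(x-\frac12,y+\frac12),(x+\frac12,y-\frac12),(x+\frac32,y+\frac12),(x+\frac12,y+\frac32)$, and delete the other cubes. The union $\tilde{\cal R}_\kappa$ is a cubiculated region after a $45^\circ$ rotation about the $z$-axis and horizontal rescaling. Each horizontal slab of ${\mathbf t}$ contains exactly two cubes of $\kappa$, and it is sent to the domino formed by their two inflated squares. Each vertical domino of ${\mathbf t}$ whose cubes are in $\kappa$ is sent to the vertical domino formed by their inflations. Vertical dominoes with cubes not in $\kappa$ are deleted. This gives a domino tiling $\tilde{\mathbf t}_\kappa$ of $\tilde{\cal R}_\kappa$, and $\operatorname{Tw}_\kappa({\mathbf t}):=\operatorname{Tw}(\tilde{\mathbf t}_\kappa)\in\mathbb{Z}$. *)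

From Stdlib Require Import ZArith List QArith Relations.
Import ListNotations.
Open Scope Z_scope.

(* The unit square [x,x+1]x[y,y+1] is represented by (x,y). *)
Definition square := (Z * Z)%type.
(* The unit cube [x,x+1]x[y,y+1]x[z,z+1] is represented by (x,y,z). *)
Definition cube := (Z * Z * Z)%type.

Definition cx (c : cube) : Z := fst (fst c).
Definition cy (c : cube) : Z := snd (fst c).
Definition cz (c : cube) : Z := snd c.

(* A domino is a union of two unit cubes sharing a face; it is represented
   by the (unordered) pair of its two cubes. *)
Definition domino := (cube * cube)%type.

Definition share_face (a b : cube) : Prop :=
  Z.abs (cx a - cx b) + Z.abs (cy a - cy b) + Z.abs (cz a - cz b) = 1.

Definition domino_cubes (d : domino) : list cube := [fst d; snd d].

Definition domino_tiling (inR : cube -> Prop) (s : list domino) : Prop :=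
  (forall d, In d s -> share_face (fst d) (snd d)) /\
  NoDup (flat_map domino_cubes s) /\
  (forall c, In c (flat_map domino_cubes s) <-> inR c).

Definition is_hy (d : domino) : bool :=
  (cx (fst d) =? cx (snd d)) && (cz (fst d) =? cz (snd d)) &&
  (Z.abs (cy (fst d) - cy (snd d)) =? 1).

Definition is_vert (d : domino) : bool :=
  (cx (fst d) =? cx (snd d)) && (cy (fst d) =? cy (snd d)) &&
  (Z.abs (cz (fst d) - cz (snd d)) =? 1).

Definition low_y (d : domino) : cube :=
  if cy (fst d) <=? cy (snd d) then fst d else snd d.
Definition low_z (d : domino) : cube :=
  if cz (fst d) <=? cz (snd d) then fst d else snd d.

Definition sgn (b : bool) : Z := if b then -1 else 1.

(* The global normalization of the sign is left as a
   parameter [nrm] (the effect is multiplied by (-1)^nrm): the context only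
   says that the normalization is fixed.  The four binary parameters are:
   side (d1 on the +x side of d0), which cube of d0 (larger y), parity of the
   x-distance, and level (lower cube of d1 on the floor of d0); changing
   any one of them changes the sign. *)
Definition effect (nrm : bool) (d0 d1 : domino) : Z :=
  if is_hy d0 && is_vert d1 then
    let x0 := cx (low_y d0) in let y0 := cy (low_y d0) in
    let z0 := cz (low_y d0) in
    let x1 := cx (low_z d1) in let y1 := cy (low_z d1) in
    let z1 := cz (low_z d1) in
    let on_floor := (z1 =? z0) || (z1 + 1 =? z0) in
    (* projections of the interiors onto the plane x = 0 intersect:
       (y0,y0+2)x(z0,z0+1) meets (y1,y1+1)x(z1,z1+2) *)
    let proj := (y0 <? y1 + 1) && (y1 <? y0 + 2) &&
                (z0 <? z1 + 2) && (z1 <? z0 + 1) in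
    if on_floor && proj then
      sgn nrm * sgn (x0 <? x1) * sgn (y1 =? y0 + 1)
        * sgn (Z.even (x1 - x0)) * sgn (z1 =? z0)
    else 0
  else 0.

Definition twist_sum (nrm : bool) (s : list domino) : Z :=
  fold_right Z.add 0
    (map (fun d0 => fold_right Z.add 0 (map (fun d1 => effect nrm d0 d1) s)) s).

Definition Tw (nrm : bool) (s : list domino) : Q := inject_Z (twist_sum nrm s) / 4.

Definition king_adj (a b : square) : Prop :=
  Z.abs (fst a - fst b) <= 1 /\ Z.abs (snd a - snd b) <= 1.
Definition edge_adj (a b : square) : Prop :=
  Z.abs (fst a - fst b) + Z.abs (snd a - snd b) = 1.

(* The closed union of the squares of D is connected: any two squares of D
   are joined by a chain of squares of D, consecutive ones sharing at least
   a point. *)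
Definition plane_connected (D : list square) : Prop :=
  forall a b, In a D -> In b D ->
    clos_refl_trans square (fun u v => In u D /\ In v D /\ king_adj u v) a b.

(* The complement of the closed union of D in R^2 is connected: every unit
   square not in D is joined, through squares not in D sharing an edge, to a
   square lying strictly to the right of D. (For a connected finite union of
   closed squares this is equivalent to simple connectivity.) *)
Definition plane_simply_connected (D : list square) : Prop :=
  plane_connected D /\
  forall a, ~ In a D ->
    exists b, (forall d, In d D -> fst d < fst b) /\
      clos_refl_trans square (fun u v => ~ In u D /\ ~ In v D /\ edge_adj u v) a b.

Definition in_cylinder (D : list square) (N : nat) (c : cube) : Prop :=
  In (cx c, cy c) D /\ 0 <= cz c < Z.of_nat N.

(* pieces of a mixed tiling; the cube argument is the lower corner *)
Inductive piece :=
  | Slab (c : cube)   (* [x,x+2]x[y,y+2]x[z,z+1] *)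
  | VDom (c : cube).  (* [x,x+1]x[y,y+1]x[z,z+2] *)

Definition piece_cubes (p : piece) : list cube :=
  match p with
  | Slab (x, y, z) => [(x, y, z); (x + 1, y, z); (x, y + 1, z); (x + 1, y + 1, z)]
  | VDom (x, y, z) => [(x, y, z); (x, y, z + 1)]
  end.

Definition mixed_tiling (inR : cube -> Prop) (t : list piece) : Prop :=
  NoDup (flat_map piece_cubes t) /\
  (forall c, In c (flat_map piece_cubes t) <-> inR c).

(* kappa with parity e: cubes with Z.even (x+y) = e *)
Definition in_kappa (e : bool) (c : cube) : bool := Bool.eqb (Z.even (cx c + cy c)) e.

(* The inflated square of (x,y) (x+y of fixed parity) is sent, by the
   rotation (X,Y) |-> ((X+Y)/2, (Y-X)/2) (rotation by -45 degrees composed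
   with rescaling by 1/sqrt 2) followed by a translation, to the unit square
   with lower corner (floor((x+y)/2), floor((y-x)/2)). *)
Definition inflate (c : cube) : cube :=
  (Z.div (cx c + cy c) 2, Z.div (cy c - cx c) 2, cz c).

Definition transform_piece (e : bool) (p : piece) : list domino :=
  match filter (in_kappa e) (piece_cubes p) with
  | [c1; c2] => [(inflate c1, inflate c2)]
  | _ => []
  end.

Definition transform (e : bool) (t : list piece) : list domino :=
  flat_map (transform_piece e) t.

Definition Tw_kappa (nrm : bool) (e : bool) (t : list piece) : Q :=
  Tw nrm (transform e t).

(* After the transformation only a slab and a vertical domino of t can interact: a slab
   becomes a horizontal domino parallel to the y-axis for exactly one parity class, and a
   vertical domino survives in exactly one.  Adding the two classes, twice the effect of a
   vertical domino v on a slab is the sum, over the four cubes q of the slab, of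
   psi(v, q) = K(q - v) * ([v starts on the floor of q] - [v ends on it]) for an explicit
   planar kernel K.  Summed over all pieces of t this becomes, for each v, the sum of
   psi(v, -) over the whole cylinder, which vanishes column by column since every column
   contains both floors of v, minus the terms psi between vertical dominoes, which are
   antisymmetric and cancel in the double sum. *)

From Stdlib Require Import ZArith List Lia QArith Bool Permutation.
Import ListNotations.
Open Scope Z_scope.

Definition sumZ {A} (l : list A) (f : A -> Z) : Z := fold_right Z.add 0 (map f l).

Lemma sumZ_nil {A} (f : A -> Z) : sumZ [] f = 0.
Proof. reflexivity. Qed.

Lemma sumZ_cons {A} (a : A) l f : sumZ (a :: l) f = f a + sumZ l f.
Proof. reflexivity. Qed.

Lemma sumZ_ext {A} (l : list A) f g :
  (forall a, In a l -> f a = g a) -> sumZ l f = sumZ l g.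
Proof.
  induction l as [|a l IH]; intros Hfg; [reflexivity|].
  rewrite !sumZ_cons, Hfg, IH;
    [reflexivity | intros b Hb; apply Hfg; right; exact Hb | left; reflexivity].
Qed.

Lemma sumZ_zero {A} (l : list A) : sumZ l (fun _ => 0) = 0.
Proof. induction l as [|a l IH]; [reflexivity|]. now rewrite sumZ_cons, IH. Qed.

Lemma sumZ_app {A} (l1 l2 : list A) f : sumZ (l1 ++ l2) f = sumZ l1 f + sumZ l2 f.
Proof. induction l1 as [|a l1 IH]; [reflexivity|]. cbn [app]. rewrite !sumZ_cons, IH. ring. Qed.

Lemma sumZ_flat_map {A B} (g : A -> list B) l f :
  sumZ (flat_map g l) f = sumZ l (fun a => sumZ (g a) f).
Proof.
  induction l as [|a l IH]; [reflexivity|].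
  cbn [flat_map]. now rewrite sumZ_app, sumZ_cons, IH.
Qed.

Lemma sumZ_map {A B} (g : A -> B) l f : sumZ (map g l) f = sumZ l (fun a => f (g a)).
Proof. unfold sumZ. now rewrite map_map. Qed.

Lemma sumZ_add {A} (l : list A) f g : sumZ l (fun a => f a + g a) = sumZ l f + sumZ l g.
Proof. induction l as [|a l IH]; [reflexivity|]. rewrite !sumZ_cons, IH. ring. Qed.

Lemma sumZ_sub {A} (l : list A) f g : sumZ l (fun a => f a - g a) = sumZ l f - sumZ l g.
Proof. induction l as [|a l IH]; [reflexivity|]. rewrite !sumZ_cons, IH. ring. Qed.

Lemma sumZ_mul_l {A} (l : list A) c f : sumZ l (fun a => c * f a) = c * sumZ l f.
Proof. induction l as [|a l IH]; [cbn; ring|]. rewrite !sumZ_cons, IH. ring. Qed.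

Lemma sumZ_swap {A B} (l1 : list A) (l2 : list B) f :
  sumZ l1 (fun a => sumZ l2 (fun b => f a b)) = sumZ l2 (fun b => sumZ l1 (fun a => f a b)).
Proof.
  induction l1 as [|a l1 IH]; [symmetry; apply sumZ_zero|].
  rewrite sumZ_cons, IH, <- sumZ_add. reflexivity.
Qed.

Lemma sumZ_Permutation {A} (l l' : list A) f : Permutation l l' -> sumZ l f = sumZ l' f.
Proof.
  induction 1; rewrite ?sumZ_cons; try congruence. ring.
Qed.

Lemma sumZ_antisymmetric {A} (l : list A) f :
  (forall a b, In a l -> In b l -> f a b = - f b a) ->
  sumZ l (fun a => sumZ l (fun b => f a b)) = 0.
Proof.
  intros Hanti.
  enough (sumZ l (fun a => sumZ l (fun b => f a b)) =
          sumZ l (fun a => sumZ l (fun b => - f a b))) as Hopp.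
  { rewrite (sumZ_ext l (fun a => sumZ l (fun b => - f a b))
               (fun a => -1 * sumZ l (fun b => f a b))) in Hopp.
    - rewrite sumZ_mul_l in Hopp. lia.
    - intros a _. rewrite <- sumZ_mul_l. apply sumZ_ext. intros; ring. }
  rewrite sumZ_swap. apply sumZ_ext. intros a Ha. apply sumZ_ext. intros b Hb. now apply Hanti.
Qed.

Lemma NoDup_app_disjoint {A} (l1 l2 : list A) q : NoDup (l1 ++ l2) -> In q l1 -> ~ In q l2.
Proof.
  induction l1 as [|a l1 IH]; cbn [app In]; intros Hnd Hq1 Hq2; [contradiction|].
  inversion Hnd as [|? ? Ha Hnd']; subst.
  destruct Hq1 as [<- | Hq1]; [apply Ha, in_or_app; auto | exact (IH Hnd' Hq1 Hq2)].
Qed.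

Lemma NoDup_flat_map_shared {A B} (f : A -> list B) l x y q :
  NoDup (flat_map f l) -> In x l -> In y l -> In q (f x) -> In q (f y) -> x = y.
Proof.
  induction l as [|a l IH]; cbn [flat_map In]; intros Hnd Hx Hy Hqx Hqy; [contradiction|].
  destruct Hx as [<- | Hx], Hy as [<- | Hy]; auto.
  - exfalso. apply (NoDup_app_disjoint _ _ q Hnd Hqx). apply in_flat_map. eauto.
  - exfalso. apply (NoDup_app_disjoint _ _ q Hnd Hqy). apply in_flat_map. eauto.
  - exact (IH (NoDup_app_remove_l _ _ Hnd) Hx Hy Hqx Hqy).
Qed.

Definition parity_sign (k : Z) : Z := if Z.even k then 1 else -1.
Definition signed_parity (k : Z) : Z := Z.sgn k * parity_sign k.

(* The kernel is chosen so that its sums over the four squares of a slab vanish at offsets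
   of one parity and give twice the planar part of the effect at the other, so a single
   kernel covers both parity classes. *)
Definition plane_kernel (p q : Z) : Z :=
  signed_parity (p - q) * (signed_parity p + signed_parity q).
Definition slab_kernel (p q : Z) : Z :=
  plane_kernel (- p) (- q) + plane_kernel (1 - p) (- q) +
  plane_kernel (- p) (1 - q) + plane_kernel (1 - p) (1 - q).
Definition planar_effect (m n : Z) : Z :=
  if (0 <=? n) && (n <? 2) then sgn (0 <? m) * sgn (n =? 1) * sgn (Z.even m) else 0.

Lemma parity_sign_add a b : parity_sign (a + b) = parity_sign a * parity_sign b.
Proof. unfold parity_sign. rewrite Z.even_add. now destruct (Z.even a), (Z.even b). Qed.

Lemma parity_sign_sub a b : parity_sign (a - b) = parity_sign a * parity_sign b.
Proof. unfold parity_sign. rewrite Z.even_sub. now destruct (Z.even a), (Z.even b). Qed.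

Lemma parity_sign_opp a : parity_sign (- a) = parity_sign a.
Proof. unfold parity_sign. now rewrite Z.even_opp. Qed.

Lemma parity_sign_cases m :
  (exists k, m = 2 * k /\ parity_sign m = 1) \/ (exists k, m = 2 * k + 1 /\ parity_sign m = -1).
Proof.
  unfold parity_sign. destruct (Z.Even_or_Odd m) as [[k ->]|[k ->]].
  - left. exists k. now rewrite Z.even_mul.
  - right. exists k. now rewrite Z.even_odd.
Qed.

Ltac expand_parity_signs :=
  repeat first [ rewrite parity_sign_add | rewrite parity_sign_sub
               | rewrite parity_sign_opp ];
  change (parity_sign 1) with (-1); change (parity_sign 0) with 1.

Ltac destruct_parity m :=
  let k := fresh "k" in let Hm := fresh "Hm" in let Hs := fresh "Hs" in
  destruct (parity_sign_cases m) as [[k [Hm Hs]]|[k [Hm Hs]]]; rewrite ?Hs.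

Ltac destruct_sgns :=
  repeat match goal with |- context [Z.sgn ?e] =>
    first [ rewrite (Z.sgn_pos e) by lia | rewrite (Z.sgn_neg e) by lia
          | rewrite (Z.sgn_null e) by lia | destruct (Z.compare_spec e 0) ]
  end.

Lemma slab_kernel_even p q :
  Z.even (p + q) = true -> ~ (p = 0 /\ q = 0) -> ~ (p = 1 /\ q = 1) ->
  slab_kernel p q = 0.
Proof.
  intros Heven H00 H11. apply Z.even_spec in Heven as [m Hm].
  replace p with (m - (m - p)) by ring. replace q with (m + (m - p)) by lia.
  assert (Hmn : ~ (m = 0 /\ m - p = 0) /\ ~ (m = 1 /\ m - p = 0)) by lia.
  revert Hmn. generalize (m - p) as n. intros n [Hn0 Hn1].
  unfold slab_kernel, plane_kernel, signed_parity. expand_parity_signs.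
  destruct_sgns; destruct_parity m; destruct_parity n; cbn; lia.
Qed.

Lemma slab_kernel_odd m n :
  ~ (m = 0 /\ (n = 0 \/ n = 1)) ->
  slab_kernel (m - n + 1) (m + n) = -2 * planar_effect m n.
Proof.
  intros Hmn. unfold slab_kernel, plane_kernel, signed_parity, planar_effect, sgn.
  replace (Z.even m) with (parity_sign m =? 1) by (unfold parity_sign; now destruct (Z.even m)).
  expand_parity_signs.
  destruct (Z.leb_spec 0 n), (Z.ltb_spec n 2), (Z.ltb_spec 0 m), (Z.eqb_spec n 1); cbn [andb];
  destruct_sgns; destruct_parity m; destruct_parity n; cbn; lia.
Qed.

Lemma plane_kernel_opp p q : plane_kernel (- p) (- q) = plane_kernel p q.
Proof.
  unfold plane_kernel, signed_parity. replace (- p - - q) with (- (p - q)) by ring.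
  rewrite !Z.sgn_opp, !parity_sign_opp. ring.
Qed.

Definition floor_weight (z c : Z) : Z :=
  (if c =? z then 1 else 0) - (if c + 1 =? z then 1 else 0).

Lemma effect_hy_vert nrm X0 Y0 z X1 Y1 c :
  effect nrm ((X0, Y0, z), (X0, Y0 + 1, z)) ((X1, Y1, c), (X1, Y1, c + 1))
  = - sgn nrm * floor_weight z c * planar_effect (X1 - X0) (Y1 - Y0).
Proof.
  unfold effect, is_hy, is_vert, low_y, low_z, floor_weight, planar_effect, cx, cy, cz.
  cbn [fst snd]. rewrite !Z.eqb_refl.
  replace (Z.abs (Y0 - (Y0 + 1)) =? 1) with true by lia.
  replace (Z.abs (c - (c + 1)) =? 1) with true by lia.
  replace (Y0 <=? Y0 + 1) with true by lia.
  replace (c <=? c + 1) with true by lia.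
  cbn [andb fst snd].
  repeat (match goal with
          | |- context [?a =? ?b] => destruct (Z.eqb_spec a b)
          | |- context [?a <? ?b] => destruct (Z.ltb_spec a b)
          | |- context [?a <=? ?b] => destruct (Z.leb_spec a b)
          end; cbn [andb orb sgn]; try (exfalso; lia)); ring.
Qed.

Lemma sub_div2_same_parity u w :
  Z.even u = Z.even w -> u - w = 2 * (u / 2 - w / 2).
Proof.
  intros Hpar.
  pose proof (Z.div_mod u 2) as Hu. pose proof (Z.div_mod w 2) as Hw.
  rewrite !Zmod_even, Hpar in *. destruct (Z.even w); lia.
Qed.

Lemma transform_slab e x y z :
  transform_piece e (Slab (x, y, z)) =
  if Bool.eqb (Z.even (x + y)) e then [(inflate (x, y, z), inflate (x + 1, y + 1, z))]
  else [(inflate (x + 1, y, z), inflate (x, y + 1, z))].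
Proof.
  unfold transform_piece, in_kappa, piece_cubes, cx, cy. cbn [filter fst snd].
  rewrite !Z.even_add. cbn [Z.even].
  destruct (Z.even x), (Z.even y), e; reflexivity.
Qed.

Lemma transform_vdom e x y z :
  transform_piece e (VDom (x, y, z)) =
  if Bool.eqb (Z.even (x + y)) e then [(inflate (x, y, z), inflate (x, y, z + 1))] else [].
Proof.
  unfold transform_piece, in_kappa, piece_cubes, cx, cy. cbn [filter fst snd].
  now destruct (Bool.eqb (Z.even (x + y)) e).
Qed.

Lemma effect_inflate_diagonal nrm x y z d1 :
  effect nrm (inflate (x, y, z), inflate (x + 1, y + 1, z)) d1 = 0.
Proof.
  unfold effect, is_hy, inflate, cx, cy, cz. cbn [fst snd].
  replace (x + 1 + (y + 1)) with (x + y + 1 * 2) by ring. rewrite Z.div_add by lia.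
  replace ((x + y) / 2 =? (x + y) / 2 + 1) with false by lia. reflexivity.
Qed.

Lemma inflate_antidiagonal x y z :
  (inflate (x + 1, y, z), inflate (x, y + 1, z)) =
  (((x + 1 + y) / 2, (y - (x + 1)) / 2, z), ((x + 1 + y) / 2, (y - (x + 1)) / 2 + 1, z)).
Proof.
  unfold inflate, cx, cy, cz. cbn [fst snd].
  replace (x + (y + 1)) with (x + 1 + y) by ring.
  replace (y + 1 - x) with (y - (x + 1) + 1 * 2) by ring. now rewrite Z.div_add by lia.
Qed.

Ltac decide_parity :=
  repeat (rewrite Z.even_add || rewrite Z.even_sub);
  repeat match goal with |- context [Z.even ?v] => is_var v; destruct (Z.even v) end;
  cbn; auto.

Lemma effect_antidiagonal_vdom nrm x y z a b c :
  Z.even (a + b) = negb (Z.even (x + y)) ->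
  floor_weight z c = 0 \/ ~ (0 <= a - x <= 1 /\ 0 <= b - y <= 1) ->
  2 * effect nrm (inflate (x + 1, y, z), inflate (x, y + 1, z))
                 (inflate (a, b, c), inflate (a, b, c + 1))
  = sgn nrm * floor_weight z c * slab_kernel (a - x) (b - y).
Proof.
  intros Hpar Hapart.
  rewrite inflate_antidiagonal. unfold inflate at 1 2, cx, cy, cz. cbn [fst snd].
  rewrite effect_hy_vert.
  set (m := (a + b) / 2 - (x + 1 + y) / 2). set (n := (b - a) / 2 - (y - (x + 1)) / 2).
  assert (Hm : a + b - (x + 1 + y) = 2 * m) by (apply sub_div2_same_parity; revert Hpar;
    decide_parity).
  assert (Hn : b - a - (y - (x + 1)) = 2 * n) by (apply sub_div2_same_parity; revert Hpar;
    decide_parity).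
  replace (a - x) with (m - n + 1) by lia. replace (b - y) with (m + n) by lia.
  destruct Hapart as [Hflat | Hapart].
  - rewrite Hflat. ring.
  - rewrite slab_kernel_odd by lia. ring.
Qed.

Definition transformed_effect (nrm e : bool) (p0 p1 : piece) : Z :=
  sumZ (transform_piece e p0)
       (fun d0 => sumZ (transform_piece e p1) (fun d1 => effect nrm d0 d1)).

Lemma transformed_effect_slab_vdom nrm x y z a b c :
  floor_weight z c = 0 \/ ~ (0 <= a - x <= 1 /\ 0 <= b - y <= 1) ->
  2 * (transformed_effect nrm true (Slab (x, y, z)) (VDom (a, b, c)) +
       transformed_effect nrm false (Slab (x, y, z)) (VDom (a, b, c)))
  = sgn nrm * floor_weight z c * slab_kernel (a - x) (b - y).
Proof.
  intros Hapart. unfold transformed_effect. rewrite !transform_slab, !transform_vdom.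
  destruct (Z.even (x + y)) eqn:Exy, (Z.even (a + b)) eqn:Eab;
    cbn [Bool.eqb sumZ map fold_right];
    rewrite ?effect_inflate_diagonal, !Z.add_0_r, ?Z.add_0_l;
    try (apply effect_antidiagonal_vdom; [rewrite Exy, Eab | ]; auto).
  all: destruct Hapart as [Hflat | Hapart]; [rewrite Hflat; ring|].
  all: rewrite slab_kernel_even; [ring | | lia | lia].
  all: replace (a - x + (b - y)) with (a + b - (x + y)) by ring.
  all: rewrite Z.even_sub, Exy, Eab; reflexivity.
Qed.

Lemma transformed_effect_vdom_l nrm e v p1 : transformed_effect nrm e (VDom v) p1 = 0.
Proof.
  destruct v as [[x y] z]. unfold transformed_effect. rewrite transform_vdom.
  destruct (Bool.eqb (Z.even (x + y)) e); [|reflexivity].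
  rewrite sumZ_cons, sumZ_nil, (sumZ_ext _ _ (fun _ => 0)), sumZ_zero; [reflexivity|].
  intros d1 _. unfold effect, is_hy, inflate, cz. cbn [fst snd].
  now replace (z =? z + 1) with false by lia; rewrite !andb_false_r.
Qed.

Lemma transformed_effect_slab_slab nrm e u v : transformed_effect nrm e (Slab u) (Slab v) = 0.
Proof.
  destruct u as [[x y] z], v as [[x' y'] z']. unfold transformed_effect. rewrite !transform_slab.
  destruct (Bool.eqb (Z.even (x + y)) e), (Bool.eqb (Z.even (x' + y')) e);
    cbn [sumZ map fold_right]; unfold effect, is_vert, inflate, cz; cbn [fst snd];
    rewrite Z.sub_diag, !andb_false_r; reflexivity.
Qed.

Definition cube_kernel (v q : cube) : Z :=
  plane_kernel (cx q - cx v) (cy q - cy v) * floor_weight (cz q) (cz v).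

Definition tile_kernel (p0 p1 : piece) : Z :=
  match p1 with
  | VDom v => sumZ (piece_cubes p0) (cube_kernel v)
  | Slab _ => 0
  end.

Definition vdom_pair_kernel (p0 p1 : piece) : Z :=
  match p0 with
  | VDom _ => tile_kernel p0 p1
  | Slab _ => 0
  end.

Lemma vdom_pair_kernel_antisym p0 p1 : vdom_pair_kernel p0 p1 = - vdom_pair_kernel p1 p0.
Proof.
  destruct p0 as [u|[[x y] z]], p1 as [v|[[a b] c]]; cbn [vdom_pair_kernel tile_kernel]; try ring.
  unfold cube_kernel, sumZ, piece_cubes, cx, cy, cz; cbn [map fold_right fst snd].
  replace (a - x) with (- (x - a)) by ring. replace (b - y) with (- (y - b)) by ring.
  rewrite plane_kernel_opp. unfold floor_weight.
  repeat match goal with |- context [?s =? ?t] => destruct (Z.eqb_spec s t) end; lia.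
Qed.

Lemma tile_kernel_slab x y z v :
  tile_kernel (Slab (x, y, z)) (VDom v)
  = floor_weight z (cz v) * slab_kernel (cx v - x) (cy v - y).
Proof.
  destruct v as [[a b] c].
  unfold tile_kernel, cube_kernel, slab_kernel, sumZ, piece_cubes, cx, cy, cz.
  cbn [map fold_right fst snd].
  replace (- (a - x)) with (x - a) by ring. replace (- (b - y)) with (y - b) by ring.
  replace (1 - (a - x)) with (x + 1 - a) by ring. replace (1 - (b - y)) with (y + 1 - b) by ring.
  ring.
Qed.

Lemma transformed_effect_pair nrm p0 p1 :
  (forall q, In q (piece_cubes p0) -> In q (piece_cubes p1) -> p0 = p1) ->
  2 * (transformed_effect nrm true p0 p1 + transformed_effect nrm false p0 p1)
  = sgn nrm * (tile_kernel p0 p1 - vdom_pair_kernel p0 p1).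
Proof.
  intros Hdisj.
  destruct p0 as [[[x y] z]|u], p1 as [v|[[a b] c]];
    [| | rewrite !transformed_effect_vdom_l; cbn; ring..].
  { rewrite !transformed_effect_slab_slab. cbn. ring. }
  cbn [vdom_pair_kernel].
  rewrite tile_kernel_slab, transformed_effect_slab_vdom; unfold cx, cy, cz; cbn [fst snd];
    [ring|].
  destruct (Z.eq_dec (floor_weight z c) 0) as [Hflat | Hfloor]; [now left | right].
  intros Hunder. enough (Slab (x, y, z) = VDom (a, b, c)) by discriminate.
  apply (Hdisj (a, b, z)).
  - assert (Ha : a = x \/ a = x + 1) by lia. assert (Hb : b = y \/ b = y + 1) by lia.
    cbn. destruct Ha as [-> | ->], Hb as [-> | ->]; tauto.
  - unfold floor_weight in Hfloor. cbn.
    destruct (Z.eqb_spec c z), (Z.eqb_spec (c + 1) z); subst; auto; lia.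
Qed.

Definition cylinder_cubes (D : list square) (N : nat) : list cube :=
  flat_map (fun s : square => map (fun k => (fst s, snd s, Z.of_nat k)) (seq 0 N)) D.

Lemma in_cylinder_cubes D N q : In q (cylinder_cubes D N) <-> in_cylinder D N q.
Proof.
  destruct q as [[qx qy] qz]. unfold cylinder_cubes, in_cylinder, cx, cy, cz; cbn [fst snd].
  rewrite in_flat_map. split.
  - intros [[sx sy] [Hs Hq]]. apply in_map_iff in Hq as [k [Hk Hk']].
    apply in_seq in Hk'. inversion Hk; subst. split; [auto | lia].
  - intros [Hs Hz]. exists (qx, qy). split; [exact Hs|]. apply in_map_iff.
    exists (Z.to_nat qz). split; [cbn; f_equal; lia | apply in_seq; lia].
Qed.

Lemma NoDup_cylinder_cubes D N : NoDup D -> NoDup (cylinder_cubes D N).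
Proof.
  induction 1 as [|s D Hs HD IH]; [constructor|].
  cbn [cylinder_cubes flat_map]. apply NoDup_app; [| exact IH |].
  - apply FinFun.Injective_map_NoDup; [|apply seq_NoDup]. intros k k' Hk. inversion Hk. lia.
  - intros q Hq1 Hq2. apply in_map_iff in Hq1 as [k [<- _]].
    apply in_cylinder_cubes in Hq2 as [Hs' _]. destruct s. contradiction.
Qed.

Lemma sumZ_seq_indicator N c :
  sumZ (seq 0 N) (fun k => if c =? Z.of_nat k then 1 else 0)
  = if (0 <=? c) && (c <? Z.of_nat N) then 1 else 0.
Proof.
  induction N as [|N IH].
  { cbn [seq Z.of_nat]. rewrite sumZ_nil.
    destruct (Z.leb_spec 0 c), (Z.ltb_spec c 0); cbn [andb]; lia. }
  rewrite seq_S, sumZ_app, IH, sumZ_cons, sumZ_nil, Nat.add_0_l, Nat2Z.inj_succ.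
  destruct (Z.leb_spec 0 c), (Z.ltb_spec c (Z.of_nat N)), (Z.ltb_spec c (Z.succ (Z.of_nat N))),
    (Z.eqb_spec c (Z.of_nat N)); cbn [andb]; lia.
Qed.

Lemma sumZ_column_floor_weight N c :
  0 <= c -> c + 1 < Z.of_nat N -> sumZ (seq 0 N) (fun k => floor_weight (Z.of_nat k) c) = 0.
Proof.
  intros Hc HcN. unfold floor_weight.
  rewrite (sumZ_sub _ (fun k => if c =? Z.of_nat k then 1 else 0)
                      (fun k => if c + 1 =? Z.of_nat k then 1 else 0)).
  rewrite !sumZ_seq_indicator.
  replace ((0 <=? c) && (c <? Z.of_nat N)) with true by lia.
  replace ((0 <=? c + 1) && (c + 1 <? Z.of_nat N)) with true by lia.
  reflexivity.
Qed.

Lemma sumZ_cylinder_cube_kernel D N v :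
  0 <= cz v -> cz v + 1 < Z.of_nat N -> sumZ (cylinder_cubes D N) (cube_kernel v) = 0.
Proof.
  intros Hc HcN. unfold cylinder_cubes. rewrite sumZ_flat_map.
  rewrite (sumZ_ext D _ (fun _ => 0)); [apply sumZ_zero|]. intros s _.
  rewrite sumZ_map. unfold cube_kernel, cx, cy, cz. cbn [fst snd].
  rewrite (sumZ_mul_l _ (plane_kernel (fst s - fst (fst v)) (snd s - snd (fst v)))
                       (fun k => floor_weight (Z.of_nat k) (snd v))).
  rewrite sumZ_column_floor_weight by assumption. ring.
Qed.

Lemma sumZ_tile_kernel_tiling D N t p1 :
  NoDup D -> mixed_tiling (in_cylinder D N) t -> In p1 t ->
  sumZ t (fun p0 => tile_kernel p0 p1) = 0.
Proof.
  intros HD [Hnd Hcover] Hp1.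
  destruct p1 as [s | v]; [apply sumZ_zero|]. cbn [tile_kernel].
  rewrite <- (sumZ_flat_map piece_cubes t (cube_kernel v)).
  assert (Hperm : Permutation (flat_map piece_cubes t) (cylinder_cubes D N)).
  { apply NoDup_Permutation; [exact Hnd | now apply NoDup_cylinder_cubes |].
    intros q. now rewrite in_cylinder_cubes. }
  assert (Hcube : forall q, In q (piece_cubes (VDom v)) -> in_cylinder D N q).
  { intros q Hq. apply Hcover, in_flat_map. eauto. }
  destruct v as [[a b] c].
  destruct (Hcube (a, b, c)) as [_ Hlow]; [cbn; auto|].
  destruct (Hcube (a, b, c + 1)) as [_ Hhigh]; [cbn; auto|].
  rewrite (sumZ_Permutation _ _ _ Hperm).
  apply sumZ_cylinder_cube_kernel; unfold cz in *; cbn [snd] in *; lia.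
Qed.

Lemma twist_sum_transform nrm e t :
  twist_sum nrm (transform e t)
  = sumZ t (fun p0 => sumZ t (fun p1 => transformed_effect nrm e p0 p1)).
Proof.
  change (twist_sum nrm (transform e t)) with
    (sumZ (transform e t) (fun d0 => sumZ (transform e t) (fun d1 => effect nrm d0 d1))).
  unfold transform. rewrite sumZ_flat_map. apply sumZ_ext. intros p0 _.
  unfold transformed_effect. rewrite (sumZ_swap t). apply sumZ_ext. intros d0 _.
  apply sumZ_flat_map.
Qed.

Lemma twist_sums_as_kernel_sums nrm t :
  NoDup (flat_map piece_cubes t) ->
  2 * (twist_sum nrm (transform true t) + twist_sum nrm (transform false t))
  = sgn nrm * (sumZ t (fun p1 => sumZ t (fun p0 => tile_kernel p0 p1))
               - sumZ t (fun p0 => sumZ t (fun p1 => vdom_pair_kernel p0 p1))).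
Proof.
  intros Hnd.
  rewrite !twist_sum_transform, <- sumZ_add, <- sumZ_mul_l,
    (sumZ_swap t t (fun p1 p0 => tile_kernel p0 p1)), <- sumZ_sub, <- sumZ_mul_l.
  apply sumZ_ext. intros p0 Hp0.
  rewrite <- sumZ_add, <- sumZ_mul_l, <- sumZ_sub, <- sumZ_mul_l.
  apply sumZ_ext. intros p1 Hp1.
  apply transformed_effect_pair. intros q Hq0 Hq1.
  exact (NoDup_flat_map_shared _ _ _ _ q Hnd Hp0 Hp1 Hq0 Hq1).
Qed.

Lemma twist_sums_cancel nrm D N t :
  NoDup D -> mixed_tiling (in_cylinder D N) t ->
  twist_sum nrm (transform true t) + twist_sum nrm (transform false t) = 0.
Proof.
  intros HD Ht.
  enough (Hsum : 2 * (twist_sum nrm (transform true t) + twist_sum nrm (transform false t)) = 0)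
    by lia.
  rewrite twist_sums_as_kernel_sums by apply Ht.
  rewrite (sumZ_antisymmetric t vdom_pair_kernel) by (intros; apply vdom_pair_kernel_antisym).
  rewrite (sumZ_ext t _ (fun _ => 0)), sumZ_zero; [ring|].
  intros p1 Hp1. exact (sumZ_tile_kernel_tiling D N t p1 HD Ht Hp1).
Qed.

(* The cancellation happens column by column. *)
Theorem lemma4p1 (nrm : bool) (D : list square) (N : nat) (t : list piece) :
  NoDup D ->
  plane_simply_connected D ->
  mixed_tiling (in_cylinder D N) t ->
  (Tw_kappa nrm true t == - Tw_kappa nrm false t)%Q.
Proof.
  intros HD _ Ht. unfold Tw_kappa, Tw.
  pose proof (twist_sums_cancel nrm D N t HD Ht) as Hcancel.
  replace (twist_sum nrm (transform true t)) with (- twist_sum nrm (transform false t)) by lia.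
  rewrite inject_Z_opp. field.
Qed.
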